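(* Let $k$ be a field. The map sending a generic configuration of four flags $([x_m],[f_m])_{1\le m\le 4}$ in $k^3$ to the $4$-tuple $(z_{12},z_{21},z_{34},z_{43})$ of its edge coordinates induces a bijection from the set of generic configurations of four flags modulo the diagonal action of $\mathrm{PGL}(3,k)$ onto $(k\setminus\{0,1\})^4$. In other words, a tetrahedron of flags is parametrized by the $4$-tuple $(z_{12},z_{21},z_{34},z_{43})$ of elements of $k\setminus\{0,1\}$.
   Context: A flag in $V=k^3$ is a pair $([x],[f])\in\mathbb{P}(V)\times\mathbb{P}(V^* )$ with $f(x)=0$. A tetrahedron of flags (generic configuration of four flags) is an ordered $4$-tuple of flags $([x_m],[f_m])$ such that the points $[x_m]$ are pairwise distinct with no three collinear, and $f_m(x_n)\neq0$ for $m\neq n$. For distinct $i,j$, choose $k',l$ with $(1,2,3,4)\mapsto(i,j,k',l)$ an even permutation and set $z_{ij}=\frac{f_i(x_{k'})\det(x_i,x_j,x_l)}{f_i(x_l)\det(x_i,x_j,x_{k'})}$ (equivalently, the cross-ratio $[\ker f_i,(x_ix_j),(x_ix_{k'}),(x_ix_l)]$ in the pencil of lines through $[x_i]$, with the convention that the cross-ratio of $p_1,p_2,p_3,p_4$ is $\frac{(p_1-p_3)(p_2-p_4)}{(p_1-p_4)(p_2-p_3)}$). *)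

From HB Require Import structures.
From mathcomp Require Import all_boot all_order all_algebra.
Set Implicit Arguments. Unset Strict Implicit. Unset Printing Implicit Defensive.
Import Order.TTheory GRing.Theory Num.Theory.
Local Open Scope ring_scope.

(* Vectors of V = K^3 are column vectors, covectors (elements of V^* ) are
   row vectors; f(x) is the 1x1 product. *)
Definition app (K : fieldType) (f : 'rV[K]_3) (x : 'cV[K]_3) : K := (f *m x) 0 0.

Definition det3 (K : fieldType) (x y z : 'cV[K]_3) : K :=
  \det (\matrix_(a < 3, b < 3) (nth 0 [:: x; y; z] b) a 0).

(* [x] = [y] in P(V) (or P(V^* ) for row vectors) *)
Definition proj_eq (K : fieldType) (p q : nat) (x y : 'M[K]_(p, q)) : Prop :=
  exists c : K, c != 0 /\ x = c *: y.

Definition is_flag (K : fieldType) (x : 'cV[K]_3) (f : 'rV[K]_3) : Prop :=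
  x != 0 /\ f != 0 /\ app f x = 0.

Definition tetrahedron (K : fieldType) (x : 'I_4 -> 'cV[K]_3)
    (f : 'I_4 -> 'rV[K]_3) : Prop :=
  (forall m, is_flag (x m) (f m)) /\
  (forall m n, m != n -> ~ proj_eq (x m) (x n)) /\
  (forall m n p, m != n -> n != p -> m != p -> det3 (x m) (x n) (x p) != 0) /\
  (forall m n, m != n -> app (f m) (x n) != 0).

Definition ninv (s : seq 'I_4) : nat :=
  sumn [seq sumn [seq nat_of_bool (nth ord0 s q < nth ord0 s p)%N
                   | q <- iota p.+1 (size s - p.+1)]
       | p <- iota 0 (size s)].

(* For distinct i, j: the pair (k', l) such that (1,2,3,4) |-> (i,j,k',l) is
   an even permutation. *)
Definition compl_pair (i j : 'I_4) : 'I_4 * 'I_4 :=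
  let rest := [seq m <- enum 'I_4 | (m != i) && (m != j)] in
  let a := nth ord0 rest 0 in
  let b := nth ord0 rest 1 in
  if odd (ninv [:: i; j; a; b]) then (b, a) else (a, b).

Definition zcoord (K : fieldType) (x : 'I_4 -> 'cV[K]_3)
    (f : 'I_4 -> 'rV[K]_3) (i j : 'I_4) : K :=
  let k' := (compl_pair i j).1 in
  let l := (compl_pair i j).2 in
  (app (f i) (x k') * det3 (x i) (x j) (x l)) /
  (app (f i) (x l) * det3 (x i) (x j) (x k')).

(* the 4-tuple (z12, z21, z34, z43); indices shifted to 'I_4 = {0,..,3} *)
Definition edge_coords (K : fieldType) (x : 'I_4 -> 'cV[K]_3)
    (f : 'I_4 -> 'rV[K]_3) : K * K * K * K :=
  (zcoord x f (inord 0) (inord 1), zcoord x f (inord 1) (inord 0),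
   zcoord x f (inord 2) (inord 3), zcoord x f (inord 3) (inord 2)).

(* Two configurations define the same point of (flags^4)/PGL(3,K): there is
   g in GL(3,K) with [x'_m] = [g x_m] and [f'_m] = [f_m o g^{-1}] for all m. *)
Definition pgl_equiv (K : fieldType) (x : 'I_4 -> 'cV[K]_3)
    (f : 'I_4 -> 'rV[K]_3) (x' : 'I_4 -> 'cV[K]_3) (f' : 'I_4 -> 'rV[K]_3)
    : Prop :=
  exists g : 'M[K]_3, g \in unitmx /\
    forall m, proj_eq (x' m) (g *m x m) /\ proj_eq (f' m) (f m *m invmx g).

Definition not01 (K : fieldType) (a : K) : Prop := a != 0 /\ a != 1.

From mathcomp Require Import all_boot all_order all_algebra ring.
Import GRing.Theory.
Local Open Scope ring_scope.
Set Implicit Arguments. Unset Strict Implicit.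

(* Four points in general position in P^2 form a projective frame, so after
   a PGL(3)-move the points of a tetrahedron of flags are the standard frame
   e0, e1, e2, e0+e1+e2.  A covector vanishing at one frame point and at no
   other one is then determined up to scale by a single ratio of its values
   at two other frame points, which is exactly the edge coordinate z12, z21,
   z34 or z43 of that vertex; the nonvanishing conditions say precisely that
   this ratio is neither 0 nor 1.  Invariance holds because
   every z_ij is a ratio in which each point, each covector and det(g) occur
   equally often in numerator and denominator. *)

Definition v0 : 'I_4 := Ordinal (isT : 0 < 4)%N.
Definition v1 : 'I_4 := Ordinal (isT : 1 < 4)%N.
Definition v2 : 'I_4 := Ordinal (isT : 2 < 4)%N.
Definition v3 : 'I_4 := Ordinal (isT : 3 < 4)%N.
Definition k0 : 'I_3 := Ordinal (isT : 0 < 3)%N.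
Definition k1 : 'I_3 := Ordinal (isT : 1 < 3)%N.
Definition k2 : 'I_3 := Ordinal (isT : 2 < 3)%N.

Lemma ord4_cases (m : 'I_4) : [\/ m = v0, m = v1, m = v2 | m = v3].
Proof.
case: m => [[|[|[|[|//]]]] Hm];
  [apply: Or41 | apply: Or42 | apply: Or43 | apply: Or44]; exact: val_inj.
Qed.

Lemma ord3_cases (i : 'I_3) : [\/ i = k0, i = k1 | i = k2].
Proof.
case: i => [[|[|[|//]]] Hi]; [apply: Or31 | apply: Or32 | apply: Or33]; exact: val_inj.
Qed.

Lemma edge_coordsE (K : fieldType) (x : 'I_4 -> 'cV[K]_3) (f : 'I_4 -> 'rV[K]_3) :
  edge_coords x f = (zcoord x f v0 v1, zcoord x f v1 v0, zcoord x f v2 v3, zcoord x f v3 v2).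
Proof.
by rewrite /edge_coords; congr (_, _, _, _); congr zcoord; apply/val_inj; rewrite /= inordK.
Qed.

Lemma enum_ord4 : enum 'I_4 = [:: v0; v1; v2; v3].
Proof. by apply: (inj_map val_inj); rewrite val_enum_ord. Qed.

Lemma compl_pair01 : compl_pair v0 v1 = (v2, v3).
Proof. by rewrite /compl_pair enum_ord4; vm_compute. Qed.
Lemma compl_pair10 : compl_pair v1 v0 = (v3, v2).
Proof. by rewrite /compl_pair enum_ord4; vm_compute. Qed.
Lemma compl_pair23 : compl_pair v2 v3 = (v0, v1).
Proof. by rewrite /compl_pair enum_ord4; vm_compute. Qed.
Lemma compl_pair32 : compl_pair v3 v2 = (v1, v0).
Proof. by rewrite /compl_pair enum_ord4; vm_compute. Qed.

Lemma big_ord3 (R : zmodType) (F : 'I_3 -> R) : \sum_i F i = F k0 + F k1 + F k2.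
Proof. by rewrite !big_ord_recr big_ord0 /= add0r; congr (F _ + F _ + F _); exact: val_inj. Qed.

Lemma det_mx22 (R : comNzRingType) (A : 'M[R]_2) : \det A = A 0 0 * A 1 1 - A 0 1 * A 1 0.
Proof.
rewrite (expand_det_row _ 0) !big_ord_recr big_ord0 /= add0r /cofactor !det_mx11 !mxE.
have -> : widen_ord (leqnSn 1) ord_max = 0 :> 'I_2 by apply: val_inj.
have -> : lift 0 (0 : 'I_1) = 1 :> 'I_2 by apply: val_inj.
have -> : lift ord_max (0 : 'I_1) = 0 :> 'I_2 by apply: val_inj.
have -> : ord_max = 1 :> 'I_2 by apply: val_inj.
by rewrite expr0 expr1; ring.
Qed.

Lemma det_mx33 (R : comNzRingType) (A : 'M[R]_3) : \det A =
  A k0 k0 * (A k1 k1 * A k2 k2 - A k1 k2 * A k2 k1)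
  - A k0 k1 * (A k1 k0 * A k2 k2 - A k1 k2 * A k2 k0)
  + A k0 k2 * (A k1 k0 * A k2 k1 - A k1 k1 * A k2 k0).
Proof.
rewrite (expand_det_row _ 0) !big_ord_recr big_ord0 /= add0r /cofactor !det_mx22 !mxE.
(* Normalise the lifted cofactor indices so that [ring] identifies equal entries. *)
set B := fun a b : nat => A (inord a) (inord b).
have AB i j : A i j = B i j by rewrite /B !inord_val.
by rewrite !AB /= /bump /=; ring.
Qed.

Section Flags.
Variable K : fieldType.
Implicit Types (x : 'I_4 -> 'cV[K]_3) (f : 'I_4 -> 'rV[K]_3).

Definition cols3 (x y z : 'cV[K]_3) : 'M[K]_3 :=
  \matrix_(a < 3, b < 3) (nth 0 [:: x; y; z] b) a 0.

Lemma det3E (x y z : 'cV[K]_3) : det3 x y z =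
  x k0 0 * (y k1 0 * z k2 0 - z k1 0 * y k2 0)
  - y k0 0 * (x k1 0 * z k2 0 - z k1 0 * x k2 0)
  + z k0 0 * (x k1 0 * y k2 0 - y k1 0 * x k2 0).
Proof. by rewrite /det3 det_mx33 !mxE /=; ring. Qed.

Lemma det3Z (a b c : K) (x y z : 'cV[K]_3) :
  det3 (a *: x) (b *: y) (c *: z) = a * b * c * det3 x y z.
Proof. by rewrite !det3E !mxE; ring. Qed.

Lemma cols3_mulmx (g : 'M[K]_3) (x y z : 'cV[K]_3) :
  cols3 (g *m x) (g *m y) (g *m z) = g *m cols3 x y z.
Proof.
apply/matrixP => a b; rewrite !mxE.
by case: (ord3_cases b) => -> /=; rewrite mxE; apply: eq_bigr => i _; rewrite mxE.
Qed.

Lemma det3_mulmx (g : 'M[K]_3) (x y z : 'cV[K]_3) :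
  det3 (g *m x) (g *m y) (g *m z) = \det g * det3 x y z.
Proof.
change (\det (cols3 (g *m x) (g *m y) (g *m z)) = \det g * \det (cols3 x y z)).
by rewrite cols3_mulmx det_mulmx.
Qed.

Lemma appE (u : 'rV[K]_3) (v : 'cV[K]_3) :
  app u v = u 0 k0 * v k0 0 + u 0 k1 * v k1 0 + u 0 k2 * v k2 0.
Proof. by rewrite /app mxE big_ord3. Qed.

Lemma app_mulmx (u : 'rV[K]_3) (g : 'M[K]_3) (v : 'cV[K]_3) : app (u *m g) v = app u (g *m v).
Proof. by rewrite /app mulmxA. Qed.

Lemma appZl (a : K) (u : 'rV[K]_3) (v : 'cV[K]_3) : app (a *: u) v = a * app u v.
Proof. by rewrite /app -scalemxAl mxE. Qed.

Lemma appZr (a : K) (u : 'rV[K]_3) (v : 'cV[K]_3) : app u (a *: v) = a * app u v.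
Proof. by rewrite /app -scalemxAr mxE. Qed.

Lemma zcoord_pgl x f x' f' : pgl_equiv x f x' f' -> zcoord x' f' =2 zcoord x f.
Proof.
case=> g [gu Hg] i j; rewrite /zcoord.
set k := (compl_pair i j).1; set l := (compl_pair i j).2.
have [[ci [ci0 ->]] [di [di0 ->]]] := Hg i.
have [[cj [cj0 ->]] _] := Hg j.
have [[ck [ck0 ->]] _] := Hg k.
have [[cl [cl0 ->]] _] := Hg l.
rewrite !appZl !appZr !app_mulmx !mulKmx // !det3Z !det3_mulmx.
have s0 : di * ci * cj * ck * cl * \det g != 0.
  by rewrite !mulf_neq0 // -unitfE -unitmxE.
rewrite -[RHS](mul1r) -(divff s0) mulf_div; congr (_ / _); ring.
Qed.

Lemma edge_coords_pgl x f x' f' :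
  pgl_equiv x f x' f' -> edge_coords x f = edge_coords x' f'.
Proof. by move=> E; rewrite /edge_coords !(zcoord_pgl E). Qed.

Lemma pgl_equiv_sym x f x' f' : pgl_equiv x f x' f' -> pgl_equiv x' f' x f.
Proof.
case=> g [gu Hg]; exists (invmx g); split; first by rewrite unitmx_inv.
move=> m; have [[c [c0 ->]] [d [d0 ->]]] := Hg m; split.
- exists c^-1; split; first by rewrite invr_eq0.
  by rewrite -scalemxAr scalerA mulVf // scale1r mulKmx.
- exists d^-1; split; first by rewrite invr_eq0.
  by rewrite invmxK -scalemxAl scalerA mulVf // scale1r mulmxKV.
Qed.

Lemma pgl_equiv_trans x f x' f' x'' f'' :
  pgl_equiv x f x' f' -> pgl_equiv x' f' x'' f'' -> pgl_equiv x f x'' f''.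
Proof.
case=> g [gu Hg] [h [hu Hh]]; exists (h *m g); split; first by rewrite unitmx_mul hu gu.
have invhg : invmx (h *m g) = invmx g *m invmx h by rewrite mulmxE; exact: invrM.
move=> m; have [[c [c0 ->]] [d [d0 ->]]] := Hh m.
have [[c' [c'0 ->]] [d' [d'0 ->]]] := Hg m; split.
- exists (c * c'); split; first by rewrite mulf_neq0.
  by rewrite -scalemxAr scalerA mulmxA.
- exists (d * d'); split; first by rewrite mulf_neq0.
  by rewrite -scalemxAl scalerA invhg mulmxA.
Qed.

Lemma pgl_equiv_rescale x f f' :
  (forall m, exists2 s, s != 0 & f' m = s *: f m) -> pgl_equiv x f x f'.
Proof.
move=> Hf; exists 1%:M; split=> [|m]; first exact: unitmx1.
have [s s0 ->] := Hf m; split.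
- by exists 1; rewrite oner_eq0 scale1r mul1mx.
- by exists s; rewrite invmx1 mulmx1.
Qed.

Definition frame (m : 'I_4) : 'cV[K]_3 :=
  \col_a (if val m == 3 then 1 else if val a == val m then 1 else 0).

Lemma app_frame (u : 'rV[K]_3) m :
  app u (frame m) = nth (u 0 k0 + u 0 k1 + u 0 k2) [:: u 0 k0; u 0 k1; u 0 k2] m.
Proof. by rewrite appE !mxE; case: (ord4_cases m) => -> /=; ring. Qed.

Lemma cols3_frame (y0 y1 y2 : 'cV[K]_3) m :
  cols3 y0 y1 y2 *m frame m = nth (y0 + y1 + y2) [:: y0; y1; y2] m.
Proof.
apply/colP => a; rewrite mxE big_ord3 !mxE.
by case: (ord4_cases m) => -> /=; rewrite ?mxE; ring.
Qed.

Lemma det3_cramer (y0 y1 y2 y3 : 'cV[K]_3) :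
  det3 y0 y1 y2 *: y3 =
  det3 y3 y1 y2 *: y0 + det3 y0 y3 y2 *: y1 + det3 y0 y1 y3 *: y2.
Proof. by apply/colP => a; rewrite !mxE !det3E; case: (ord3_cases a) => ->; ring. Qed.

Lemma exists_frame_transform x :
  (forall m n p, m != n -> n != p -> m != p -> det3 (x m) (x n) (x p) != 0) ->
  exists2 N : 'M[K]_3, N \in unitmx & forall m, exists2 c, c != 0 & N *m frame m = c *: x m.
Proof.
move=> Hdet; set D := det3 (x v0) (x v1) (x v2).
have D0 : D != 0 by exact: Hdet.
set c0 := det3 (x v3) (x v1) (x v2) / D.
set c1 := det3 (x v0) (x v3) (x v2) / D.
set c2 := det3 (x v0) (x v1) (x v3) / D.
have [c00 c10 c20] : [/\ c0 != 0, c1 != 0 & c2 != 0].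
  by split; rewrite mulf_neq0 ?invr_eq0 //; apply: Hdet.
exists (cols3 (c0 *: x v0) (c1 *: x v1) (c2 *: x v2)).
  rewrite unitmxE unitfE; change (det3 (c0 *: x v0) (c1 *: x v1) (c2 *: x v2) != 0).
  by rewrite det3Z !mulf_neq0 ?invr_eq0 //; apply: Hdet.
move=> m; rewrite cols3_frame; case: (ord4_cases m) => -> /=.
- by exists c0.
- by exists c1.
- by exists c2.
exists 1; rewrite ?oner_eq0 // scale1r; apply: (scalerI D0).
by rewrite !scalerDr !scalerA ![D * _]mulrC !divfK // [RHS]det3_cramer.
Qed.

Definition generic_at (m : 'I_4) (u : 'rV[K]_3) : Prop :=
  app u (frame m) = 0 /\ forall n, m != n -> app u (frame n) != 0.

Lemma tetrahedron_normal_form x f : tetrahedron x f ->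
  exists F, pgl_equiv x f frame F /\ forall m, generic_at m (F m).
Proof.
case=> Hflag [_ [Hdet Happ]]; have [N Nu HN] := exists_frame_transform Hdet.
exists (fun m => f m *m N); split.
  apply: pgl_equiv_sym; exists N; split=> // m; have [c c0 ->] := HN m; split.
  - by exists c^-1; rewrite invr_eq0 c0 scalerA mulVf // scale1r.
  - by exists 1; rewrite oner_eq0 scale1r mulmxK.
have appN m n : app (f m *m N) (frame n) = 0 <-> app (f m) (x n) = 0.
  rewrite app_mulmx; have [c c0 ->] := HN n; rewrite appZr.
  by split=> [/eqP|->]; rewrite ?mulr0 // mulf_eq0 (negbTE c0) => /eqP.
split=> [|n mn]; first by apply/appN; case: (Hflag m) => _ [].
by apply/eqP => /appN; apply/eqP; exact: Happ.
Qed.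

Definition frame_coord (m : 'I_4) (u : 'rV[K]_3) : K :=
  let e n := app u (frame n) in
  nth 0 [:: e v2 / e v3; e v3 / e v2; - (e v0 / e v1); - (e v1 / e v0)] m.

Lemma edge_coords_frame F :
  edge_coords frame F = (frame_coord v0 (F v0), frame_coord v1 (F v1),
                         frame_coord v2 (F v2), frame_coord v3 (F v3)).
Proof.
rewrite edge_coordsE /zcoord compl_pair01 compl_pair10 compl_pair23 compl_pair32 /=.
rewrite !det3E !mxE /= !(mul0r, mulr0, mul1r, mulr1, subr0, sub0r, addr0, add0r, oppr0).
by rewrite opprK !mulrN1 !invrN !mulrNN !mulrN mulr1.
Qed.

Definition std_covector (m : 'I_4) (z : K) : 'rV[K]_3 :=
  \row_i nth 0 (nth [::] [:: [:: 0; 1 - z; z]; [:: z - 1; 0; 1];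
                            [:: z; -1; 0]; [:: 1; - z; z - 1]] m) i.

Lemma not01_div (p q : K) : p != 0 -> q != 0 -> q - p != 0 -> not01 (p / q).
Proof.
move=> p0 q0 pq; split; first by rewrite mulf_neq0 ?invr_eq0.
by apply: contra pq => /eqP/divr1_eq ->; rewrite subrr.
Qed.

Lemma generic_covectorE m u : generic_at m u ->
  not01 (frame_coord m u) /\
  exists2 s, s != 0 & u = s *: std_covector m (frame_coord m u).
Proof.
case=> um un; rewrite /frame_coord.
have -> : u = \row_i nth 0 [:: u 0 k0; u 0 k1; u 0 k2] i.
  by apply/rowP => i; rewrite mxE; case: (ord3_cases i) => ->.
move: um (un v0) (un v1) (un v2) (un v3); rewrite !app_frame !mxE /=.
move: (u 0 k0) (u 0 k1) (u 0 k2) => a b c.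
case: (ord4_cases m) => -> /=.
- move=> -> _ /(_ isT) b0 /(_ isT) c0 /(_ isT) d0; rewrite add0r in d0 *; split.
    by apply: not01_div; rewrite // addrK.
  exists (b + c) => //.
  by apply/rowP => i; rewrite !mxE; case: (ord3_cases i) => -> /=; field.
- move=> -> /(_ isT) a0 _ /(_ isT) c0 /(_ isT) d0; rewrite addr0 in d0 *; split.
    by apply: not01_div; rewrite // (addrC a) opprD addrA subrr add0r oppr_eq0.
  exists c => //.
  by apply/rowP => i; rewrite !mxE; case: (ord3_cases i) => -> /=; field.
- move=> -> /(_ isT) a0 /(_ isT) b0 _ /(_ isT) d0; rewrite addr0 in d0 *; split.
    by rewrite -mulNr; apply: not01_div; rewrite ?oppr_eq0 // opprK addrC.
  exists (- b); first by rewrite oppr_eq0.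
  by apply/rowP => i; rewrite !mxE; case: (ord3_cases i) => -> /=; field.
- move=> d0 /(_ isT) a0 /(_ isT) b0 /(_ isT) c0 _.
  have abc : a + b = - c by apply/eqP; rewrite -subr_eq0 opprK d0.
  split; first by rewrite -mulNr; apply: not01_div; rewrite ?oppr_eq0 // opprK abc oppr_eq0.
  exists a => //; have -> : c = - (a + b) by rewrite abc opprK.
  by apply/rowP => i; rewrite !mxE; case: (ord3_cases i) => -> /=; field.
Qed.

Lemma generic_covector_rescale m u u' : generic_at m u -> generic_at m u' ->
  frame_coord m u = frame_coord m u' -> exists2 s, s != 0 & u' = s *: u.
Proof.
move=> /generic_covectorE[_ [s s0 uE]] /generic_covectorE[_ [s' s'0 u'E]] E.
exists (s' / s); first by rewrite mulf_neq0 ?invr_eq0.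
by rewrite u'E -E [X in _ = _ *: X]uE scalerA divfK.
Qed.

Lemma frame_coord_std m z : frame_coord m (std_covector m z) = z.
Proof.
rewrite /frame_coord /= !app_frame !mxE; case: (ord4_cases m) => -> /=;
by rewrite ?add0r ?addr0 ?subrK ?divr1 ?invrN1 ?mulrN1 ?opprK.
Qed.

Lemma generic_std_covector m z : not01 z -> generic_at m (std_covector m z).
Proof.
case=> z0 z1; split=> [|n].
  by rewrite app_frame !mxE; case: (ord4_cases m) => -> /=; ring.
rewrite app_frame !mxE; case: (ord4_cases m) => ->; case: (ord4_cases n) => -> //= _;
  by rewrite ?add0r ?addr0 ?subrK ?oppr_eq0 ?oner_eq0 ?subr_eq0 //; rewrite eq_sym.
Qed.

Lemma det3_proj_eq (x y z : 'cV[K]_3) : proj_eq x y -> det3 x y z = 0.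
Proof. by case=> c [_ ->]; rewrite det3E !mxE; ring. Qed.

Lemma ord4_avoid (m n : 'I_4) : exists p, (p != m) && (p != n).
Proof.
case: (ord4_cases m) => ->; case: (ord4_cases n) => ->;
  first [by exists v2 | by exists v3 | by exists v0].
Qed.

Lemma not_proj_eq_of_det3 x :
  (forall m n p, m != n -> n != p -> m != p -> det3 (x m) (x n) (x p) != 0) ->
  forall m n, m != n -> ~ proj_eq (x m) (x n).
Proof.
move=> Hdet m n mn /det3_proj_eq E; have [p /andP[pm pn]] := ord4_avoid m n.
by move: (Hdet m n p mn); rewrite E eqxx eq_sym pn eq_sym pm => /(_ isT isT).
Qed.

Lemma det3_frame m n p : m != n -> n != p -> m != p ->
  det3 (frame m) (frame n) (frame p) != 0.
Proof.
case: (ord4_cases m) => ->; case: (ord4_cases n) => -> //=;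
case: (ord4_cases p) => -> //= _ _ _; rewrite det3E !mxE /=;
rewrite !(mul0r, mulr0, mul1r, mulr1, subr0, sub0r, addr0, add0r, oppr0, opprK);
by rewrite ?oppr_eq0 oner_eq0.
Qed.

Lemma tetrahedron_of_generic F :
  (forall m, generic_at m (F m)) -> tetrahedron frame F.
Proof.
move=> gF; split; [|split; [|split]].
- move=> m; have [n /andP[nm _]] := ord4_avoid m m; have [Fm0 FmE] := gF m.
  split; last split=> //; apply: contraTneq isT => E.
  + by have := proj2 (gF n) m nm; rewrite E /app mulmx0 mxE eqxx.
  + by have := FmE n; rewrite eq_sym nm E /app mul0mx mxE eqxx => /(_ isT).
- exact: (not_proj_eq_of_det3 det3_frame).
- exact: det3_frame.
- by move=> m n /(proj2 (gF m)).
Qed.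

End Flags.

Theorem mainTheorem2 (K : fieldType) :
  (forall (x : 'I_4 -> 'cV[K]_3) (f : 'I_4 -> 'rV[K]_3) (a b c d : K),
     tetrahedron x f -> edge_coords x f = (a, b, c, d) ->
     not01 a /\ not01 b /\ not01 c /\ not01 d) /\
  (forall (x x' : 'I_4 -> 'cV[K]_3) (f f' : 'I_4 -> 'rV[K]_3),
     tetrahedron x f -> tetrahedron x' f' ->
     pgl_equiv x f x' f' -> edge_coords x f = edge_coords x' f') /\
  (forall (x x' : 'I_4 -> 'cV[K]_3) (f f' : 'I_4 -> 'rV[K]_3),
     tetrahedron x f -> tetrahedron x' f' ->
     edge_coords x f = edge_coords x' f' -> pgl_equiv x f x' f') /\
  (forall a b c d : K, not01 a -> not01 b -> not01 c -> not01 d ->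
     exists (x : 'I_4 -> 'cV[K]_3) (f : 'I_4 -> 'rV[K]_3),
       tetrahedron x f /\ edge_coords x f = (a, b, c, d)).
Proof.
split; [|split; [|split]].
- move=> x f a b c d /tetrahedron_normal_form[F [xF gF]].
  have not01F m := (generic_covectorE (gF m)).1.
  rewrite (edge_coords_pgl xF) edge_coords_frame => -[<- <- <- <-].
  by split; [|split; [|split]]; apply: not01F.
- by move=> x x' f f' _ _; apply: edge_coords_pgl.
- move=> x x' f f' /tetrahedron_normal_form[F [xF gF]] /tetrahedron_normal_form[F' [xF' gF']].
  rewrite (edge_coords_pgl xF) (edge_coords_pgl xF') !edge_coords_frame => -[e0 e1 e2 e3].
  apply: (pgl_equiv_trans xF); apply: pgl_equiv_trans (pgl_equiv_sym xF').
  apply: pgl_equiv_rescale => m; apply: generic_covector_rescale => //.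
  by case: (ord4_cases m) => ->.
- move=> a b c d za zb zc zd; pose z m := nth 0 [:: a; b; c; d] m.
  exists (@frame K), (fun m => std_covector m (z m)); split.
    apply: tetrahedron_of_generic => m; apply: generic_std_covector.
    by case: (ord4_cases m) => ->.
  by rewrite edge_coords_frame !frame_coord_std.
Qed.
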